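(* Let $\mathcal{M}'$ be the set of all square matrices $(a_{i,j})$ of order at least $1$ with entries in $\{0,1\}$ such that: (1) $a_{i,i}=0$ for all $i$; (2) if $a_{i,j}=0$ then $a_{j,i}=1$ (for $i\neq j$); (3) if $a_{i,j}=a_{j,k}=0$ then $a_{i,k}=0$. Call $A,B\in\mathcal{M}'$ equivalent if there is a permutation matrix $E$ with $EAE^{-1}=B$, and let $\mathcal{M}$ be the set of equivalence classes. Then the map sending a nonempty finite $T_0$-space $X$ to the equivalence class of $X_M$ induces a bijection between the set of homeomorphism classes of nonempty finite $T_0$-spaces and $\mathcal{M}$.
   Context: A finite $T_0$-space $X$ is identified with a finite poset via $x\le y$ iff $U_x\subseteq U_y$, where $U_x$ is the intersection of all open sets containing $x$ (conversely, the down-sets of a finite poset form a $T_0$ topology); continuous maps are exactly order-preserving maps. For $X=\{x_1,\dots,x_n\}$ with a fixed labelling, $X_M=(x_{i,j})$ is the $n\times n$ matrix with $x_{i,j}=0$ if $x_i\le x_j$ and $x_{i,j}=1$ otherwise. *)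

From HB Require Import structures.
From mathcomp Require Import all_boot all_order all_algebra all_fingroup.
Set Implicit Arguments. Unset Strict Implicit. Unset Printing Implicit Defensive.
Import GRing.Theory.
Local Open Scope ring_scope.

(* A topology on a finite type T, given by its family of open sets.
   Since T is finite, closure under binary unions together with set0
   is closure under arbitrary unions. *)
Definition is_topology (T : finType) (O : {set {set T}}) : Prop :=
  [/\ set0 \in O, setT \in O,
      (forall U V, U \in O -> V \in O -> U :|: V \in O) &
      (forall U V, U \in O -> V \in O -> U :&: V \in O)].

Definition is_T0 (T : finType) (O : {set {set T}}) : Prop :=
  forall x y : T, x != y -> exists2 U, U \in O & (x \in U) != (y \in U).

Definition fin_T0_space (T : finType) (O : {set {set T}}) : Prop :=
  [/\ is_topology O, is_T0 O & (0 < #|T|)%N].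

Definition minopen (T : finType) (O : {set {set T}}) (x : T) : {set T} :=
  \bigcap_(U in O | x \in U) U.

Definition sp_le (T : finType) (O : {set {set T}}) (x y : T) : bool :=
  minopen O x \subset minopen O y.

(* X_M for the labelling lab : 'I_n -> T (x_i = lab i) *)
Definition space_mx (T : finType) (O : {set {set T}}) (n : nat)
  (lab : 'I_n -> T) : 'M[int]_n :=
  \matrix_(i, j) (if sp_le O (lab i) (lab j) then 0 else 1).

Definition homeomorphic (T1 T2 : finType) (O1 : {set {set T1}})
  (O2 : {set {set T2}}) : Prop :=
  exists f : T1 -> T2, bijective f /\ forall U : {set T1}, (U \in O1) = (f @: U \in O2).

Definition inMprime (n : nat) (A : 'M[int]_n) : Prop :=
  [/\ (0 < n)%N,
      (forall i j, A i j = 0 \/ A i j = 1),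
      (forall i, A i i = 0),
      (forall i j, i != j -> A i j = 0 -> A j i = 1) &
      (forall i j k, A i j = 0 -> A j k = 0 -> A i k = 0)].

Definition mx_equiv (n m : nat) (A : 'M[int]_n) (B : 'M[int]_m) : Prop :=
  exists e : n = m, exists E : 'M[int]_m,
    is_perm_mx E /\ E *m castmx (e, e) A *m invmx E = B.

From HB Require Import structures.
From mathcomp Require Import all_boot all_order all_algebra all_fingroup.
Set Implicit Arguments. Unset Strict Implicit. Unset Printing Implicit Defensive.

(* In a finite space the minimal open sets U_x are open, so a set is open
   exactly when it is a down-set for the specialization order x <= y iff
   U_x \subset U_y; this order is a preorder, and a partial order exactly
   for T0 spaces.  Hence homeomorphisms are the order isomorphisms, i.e.
   relabellings of X_M by a permutation, which is conjugation by a
   permutation matrix.  Conversely a matrix A of M' is the matrix of the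
   down-set topology of the partial order "A i j = 0" on its indices. *)

Section SpecializationOrder.
Variables (T : finType) (O : {set {set T}}).

Lemma mem_minopen x : x \in minopen O x.
Proof. by apply/bigcapP => U /andP[]. Qed.

Lemma minopen_min U x : U \in O -> x \in U -> minopen O x \subset U.
Proof. by move=> openU Ux; apply: bigcap_inf; rewrite openU Ux. Qed.

Lemma sp_le_refl : reflexive (sp_le O).
Proof. by move=> x; apply: subxx. Qed.

Lemma sp_le_trans : transitive (sp_le O).
Proof. by move=> y x z; apply: subset_trans. Qed.

Hypothesis topO : is_topology O.

Lemma minopen_open x : minopen O x \in O.
Proof.
case: topO => _ openT _ openI.
by apply: (big_ind (fun V => V \in O)) => // U /andP[].
Qed.

Lemma sp_leE x y : sp_le O x y = (x \in minopen O y).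
Proof.
apply/idP/idP => [le_xy | ]; first exact: subsetP le_xy _ (mem_minopen x).
exact: minopen_min (minopen_open y).
Qed.

Lemma sp_leP x y : reflect (forall U : {set T}, U \in O -> y \in U -> x \in U) (sp_le O x y).
Proof.
rewrite sp_leE; apply: (iffP idP) => [x_Uy U openU Uy | ].
  exact: subsetP (minopen_min openU Uy) x x_Uy.
by apply; [apply: minopen_open | apply: mem_minopen].
Qed.

Lemma openP (U : {set T}) : reflect (forall x y, sp_le O x y -> y \in U -> x \in U) (U \in O).
Proof.
apply: (iffP idP) => [openU x y /sp_leP le_xy | downU]; first exact: le_xy.
have -> : U = \bigcup_(y in U) minopen O y.
  apply/setP => x; apply/idP/bigcupP => [Ux | [y Uy]]; first by exists x; rewrite ?mem_minopen.
  by rewrite -sp_leE => /downU; apply.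
case: topO => open0 _ openUnion _.
by apply: (big_ind (fun V => V \in O)) => // y _; apply: minopen_open.
Qed.

Lemma sp_le_anti : is_T0 O -> antisymmetric (sp_le O).
Proof.
move=> T0O x y /andP[/sp_leP le_xy /sp_leP le_yx].
have [// | /T0O[U openU]] := eqVneq x y.
suff -> : (x \in U) = (y \in U) by rewrite eqxx.
by apply/idP/idP; [apply: le_yx | apply: le_xy].
Qed.

End SpecializationOrder.

Section Homeomorphisms.
Variables (T1 T2 : finType) (O1 : {set {set T1}}) (O2 : {set {set T2}}).
Hypotheses (topO1 : is_topology O1) (topO2 : is_topology O2).

Lemma homeo_mono_sp_le (f : T1 -> T2) : bijective f ->
  (forall U, (U \in O1) = (f @: U \in O2)) ->
  {mono f : x y / sp_le O1 x y >-> sp_le O2 x y}.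
Proof.
move=> [g fK gK] homeo_f x y.
have f_inj := can_inj fK.
have image_preimage (V : {set T2}) : f @: (g @: V) = V.
  by rewrite -imset_comp (eq_imset _ gK) imset_id.
apply/(sp_leP topO2)/(sp_leP topO1) => [le_fxy U openU Uy | le_xy V openV Vfy].
  by rewrite -(mem_imset _ _ f_inj); apply: le_fxy; rewrite -?homeo_f ?mem_imset.
rewrite -[V]image_preimage (mem_imset _ _ f_inj); apply: le_xy.
  by rewrite homeo_f image_preimage.
by rewrite -(fK y) (mem_imset _ _ (can_inj gK)).
Qed.

Lemma mono_sp_le_homeo (f : T1 -> T2) : bijective f ->
  {mono f : x y / sp_le O1 x y >-> sp_le O2 x y} ->
  forall U, (U \in O1) = (f @: U \in O2).
Proof.
move=> [g fK gK] mono_f U; have f_inj := can_inj fK.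
apply/(openP topO1)/(openP topO2) => [down1 x' y' | down2 x y le_xy Uy].
  rewrite -(gK x') -(gK y') mono_f => le_xy /imsetP[y Uy /f_inj gy'_y].
  by rewrite (mem_imset _ _ f_inj); apply: down1 le_xy _; rewrite gy'_y.
rewrite -(mem_imset _ _ f_inj); apply: down2 (imset_f f Uy).
by rewrite mono_f.
Qed.

Lemma homeomorphicP : homeomorphic O1 O2 <->
  exists2 f : T1 -> T2, bijective f & {mono f : x y / sp_le O1 x y >-> sp_le O2 x y}.
Proof.
split=> [[f [bij_f homeo_f]] | [f bij_f mono_f]].
  by exists f => //; apply: homeo_mono_sp_le.
by exists f; split => //; apply: mono_sp_le_homeo.
Qed.

End Homeomorphisms.

Local Open Scope ring_scope.

Lemma homeomorphic_card (T1 T2 : finType) (O1 : {set {set T1}}) (O2 : {set {set T2}}) :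
  homeomorphic O1 O2 -> #|T1| = #|T2|.
Proof. by move=> [f [bij_f _]]; exact: bij_eq_card bij_f. Qed.

Lemma iso_relabelP (T1 T2 : finType) (r1 : rel T1) (r2 : rel T2) n
    (lab1 : 'I_n -> T1) (lab2 : 'I_n -> T2) :
  bijective lab1 -> bijective lab2 ->
  (exists2 f : T1 -> T2, bijective f & {mono f : x y / r1 x y >-> r2 x y}) <->
  exists s : 'S_n, forall i j, r2 (lab2 i) (lab2 j) = r1 (lab1 (s i)) (lab1 (s j)).
Proof.
move=> [g1 lab1K g1K] [g2 lab2K g2K].
split=> [[f [g fK gK] mono_f] | [s rel_s]].
  have s_inj : injective (fun i => g1 (g (lab2 i))).
    by move=> i j /(can_inj g1K) /(can_inj gK) /(can_inj lab2K).
  by exists (perm s_inj) => i j; rewrite !permE !g1K -mono_f !gK.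
exists (fun x => lab2 (s^-1 (g1 x)))%g => [|x y]; last by rewrite rel_s !permKV !g1K.
by exists (fun y => lab1 (s (g2 y))) => [x | y]; rewrite ?lab2K ?permKV ?g1K ?lab1K ?permK ?g2K.
Qed.

Lemma invmx_perm (R : comUnitRingType) n (s : 'S_n) :
  invmx (perm_mx s) = perm_mx s^-1 :> 'M[R]_n.
Proof. by rewrite -[RHS](mulKmx (unitmx_perm _ s)) -perm_mxM mulgV perm_mx1 mulmx1. Qed.

Lemma conj_perm_mx (R : comUnitRingType) n (s : 'S_n) (A : 'M[R]_n) :
  perm_mx s *m A *m invmx (perm_mx s) = \matrix_(i, j) A (s i) (s j).
Proof.
rewrite invmx_perm -row_permE -[s in perm_mx s^-1]invgK -col_permE invgK.
by apply/matrixP => i j; rewrite !mxE.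
Qed.

Lemma mx_equivP n (A B : 'M[int]_n) :
  mx_equiv A B <-> exists s : 'S_n, B = \matrix_(i, j) A (s i) (s j).
Proof.
split=> [[e [E [/is_perm_mxP[s ->] <-]]] | [s ->]].
  by exists s; rewrite (eq_irrelevance e erefl) castmx_id conj_perm_mx.
by exists erefl, (perm_mx s); rewrite perm_mx_is_perm castmx_id conj_perm_mx.
Qed.

Lemma mx_equiv_refl n (A : 'M[int]_n) : mx_equiv A A.
Proof. by apply/mx_equivP; exists 1%g; apply/matrixP => i j; rewrite !mxE !perm1. Qed.

Lemma space_mx_relabel (T1 T2 : finType) (O1 : {set {set T1}}) (O2 : {set {set T2}})
    n (lab1 : 'I_n -> T1) (lab2 : 'I_n -> T2) (s : 'S_n) :
  space_mx O2 lab2 = \matrix_(i, j) space_mx O1 lab1 (s i) (s j) <->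
  forall i j, sp_le O2 (lab2 i) (lab2 j) = sp_le O1 (lab1 (s i)) (lab1 (s j)).
Proof.
split=> [/matrixP eq_mx i j | eq_le]; last by apply/matrixP => i j; rewrite !mxE eq_le.
by move: (eq_mx i j); rewrite !mxE; do 2!case: sp_le.
Qed.

Lemma space_mx_inMprime (T : finType) (O : {set {set T}}) n (lab : 'I_n -> T) :
  fin_T0_space O -> bijective lab -> inMprime (space_mx O lab).
Proof.
move=> [topO T0O T_gt0] bij_lab; have labK := bij_inj bij_lab.
split=> [| i j | i | i j neq_ij | i j k]; rewrite ?mxE.
- by rewrite -(card_ord n) (bij_eq_card bij_lab).
- by case: sp_le; [left | right].
- by rewrite sp_le_refl.
- case: ifP => // le_ij _; case: ifP => // le_ji.
  have /labK eq_ij : lab i = lab j by apply: (sp_le_anti topO T0O); rewrite le_ij le_ji.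
  by rewrite eq_ij eqxx in neq_ij.
- case: ifP => // le_ij _; case: ifP => // le_jk _.
  by rewrite (sp_le_trans le_ij le_jk).
Qed.

Lemma homeomorphic_iff_mx_equiv (T1 T2 : finType)
    (O1 : {set {set T1}}) (O2 : {set {set T2}}) n1 n2
    (lab1 : 'I_n1 -> T1) (lab2 : 'I_n2 -> T2) :
  is_topology O1 -> is_topology O2 -> bijective lab1 -> bijective lab2 ->
  homeomorphic O1 O2 <-> mx_equiv (space_mx O1 lab1) (space_mx O2 lab2).
Proof.
move=> topO1 topO2 bij_lab1 bij_lab2.
have [eq_n12 | neq_n12] := eqVneq n1 n2; last first.
  split=> [/homeomorphic_card | [eq_n12 _]]; last by rewrite eq_n12 eqxx in neq_n12.
  rewrite -(bij_eq_card bij_lab1) -(bij_eq_card bij_lab2) !card_ord.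
  by move=> /eqP; rewrite (negPf neq_n12).
subst n2; apply: (iff_trans (homeomorphicP topO1 topO2)).
apply: (iff_trans (iso_relabelP _ _ bij_lab1 bij_lab2)).
apply: iff_sym; apply: (iff_trans (mx_equivP _ _)).
by split=> -[s /space_mx_relabel eq_s]; exists s.
Qed.

Definition downset_topology (T : finType) (r : rel T) : {set {set T}} :=
  [set U : {set T} | [forall x in U, forall y, r y x ==> (y \in U)]].

Section DownsetTopology.
Variables (T : finType) (r : rel T).

Lemma downsetP (U : {set T}) :
  reflect (forall x y, x \in U -> r y x -> y \in U) (U \in downset_topology r).
Proof.
rewrite inE; apply: (iffP forall_inP) => [down x y Ux | down x Ux].
  exact/implyP/(forallP (down x Ux)).
by apply/forallP => y; apply/implyP; apply: down.
Qed.

Lemma downset_topology_is_topology : is_topology (downset_topology r).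
Proof.
split=> [| | U V /downsetP downU /downsetP downV | U V /downsetP downU /downsetP downV];
  apply/downsetP => x y; rewrite ?inE //.
  by case/orP=> [Ux | Vx] r_yx; rewrite ?(downU x y Ux r_yx) ?(downV x y Vx r_yx) ?orbT.
by case/andP=> Ux Vx r_yx; rewrite (downU x y Ux r_yx) (downV x y Vx r_yx).
Qed.

Hypotheses (r_refl : reflexive r) (r_trans : transitive r).

Lemma minopen_downset x : minopen (downset_topology r) x = [set y | r y x].
Proof.
apply/eqP; rewrite eqEsubset; apply/andP; split.
  apply: minopen_min; last by rewrite inE.
  by apply/downsetP => y z; rewrite !inE => r_yx r_zy; apply: r_trans r_yx.
apply/subsetP => y; rewrite inE => r_yx.
by apply/bigcapP => U /andP[/downsetP downU Ux]; apply: downU r_yx.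
Qed.

Lemma sp_le_downset x y : sp_le (downset_topology r) x y = r x y.
Proof. by rewrite (sp_leE downset_topology_is_topology) minopen_downset inE. Qed.

Lemma downset_topology_T0 : antisymmetric r -> is_T0 (downset_topology r).
Proof.
move=> r_anti x y neq_xy.
have [r_xy | r_xy] := boolP (r x y).
  exists (minopen (downset_topology r) x); first exact: (minopen_open downset_topology_is_topology).
  rewrite !minopen_downset !inE r_refl; apply: contra neq_xy => /eqP r_yx.
  by rewrite (r_anti x y) // r_xy -r_yx.
exists (minopen (downset_topology r) y); first exact: (minopen_open downset_topology_is_topology).
by rewrite !minopen_downset !inE r_refl (negPf r_xy).
Qed.

End DownsetTopology.

Definition mx_le n (A : 'M[int]_n) : rel 'I_n := [rel i j | A i j == 0].

Section MatrixOrder.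
Variables (n : nat) (A : 'M[int]_n).
Hypothesis MA : inMprime A.

Lemma mx_le_refl : reflexive (mx_le A).
Proof. by case: MA => _ _ A_diag _ _ i; rewrite /mx_le /= A_diag. Qed.

Lemma mx_le_trans : transitive (mx_le A).
Proof.
case: MA => _ _ _ _ A_trans j i k /eqP A_ij /eqP A_jk.
by rewrite /mx_le /= (A_trans _ _ _ A_ij A_jk).
Qed.

Lemma mx_le_anti : antisymmetric (mx_le A).
Proof.
case: MA => _ _ _ A_asym _ i j /andP[/eqP A_ij /eqP A_ji]; apply/eqP/negP => /negP neq_ij.
by have := A_asym i j neq_ij A_ij; rewrite A_ji.
Qed.

Lemma downset_mx_le_T0_space : fin_T0_space (downset_topology (mx_le A)).
Proof.
case: MA => n_gt0 _ _ _ _; split; last by rewrite card_ord.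
  exact: downset_topology_is_topology.
exact/downset_topology_T0/mx_le_anti/mx_le_trans/mx_le_refl.
Qed.

Lemma space_mx_downset_mx_le : space_mx (downset_topology (mx_le A)) id = A.
Proof.
case: MA => _ A01 _ _ _; apply/matrixP => i j.
rewrite mxE sp_le_downset /mx_le /=; last exact: mx_le_trans; last exact: mx_le_refl.
by case: (A01 i j) => ->.
Qed.

End MatrixOrder.

Theorem mainTheorem1 :
  (* the map lands in M' *)
  (forall (T : finType) (O : {set {set T}}) (n : nat) (lab : 'I_n -> T),
      fin_T0_space O -> bijective lab -> inMprime (space_mx O lab))
  /\
  (* well defined on homeomorphism classes (and independent of labelling)
     and injective on them *)
  (forall (T1 : finType) (O1 : {set {set T1}}) (n1 : nat) (lab1 : 'I_n1 -> T1)
          (T2 : finType) (O2 : {set {set T2}}) (n2 : nat) (lab2 : 'I_n2 -> T2),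
      fin_T0_space O1 -> bijective lab1 ->
      fin_T0_space O2 -> bijective lab2 ->
      (homeomorphic O1 O2 <-> mx_equiv (space_mx O1 lab1) (space_mx O2 lab2)))
  /\
  (* surjective onto the equivalence classes of M' *)
  (forall (n : nat) (A : 'M[int]_n), inMprime A ->
      exists (T : finType) (O : {set {set T}}) (lab : 'I_n -> T),
        [/\ fin_T0_space O, bijective lab & mx_equiv (space_mx O lab) A]).
Proof.
split; first exact: space_mx_inMprime.
split=> [T1 O1 n1 lab1 T2 O2 n2 lab2 [topO1 _ _] bij_lab1 [topO2 _ _] bij_lab2 | n A MA].
  exact: homeomorphic_iff_mx_equiv.
exists _, (downset_topology (mx_le A)), id; split.
- exact: downset_mx_le_T0_space.
- by exists id.
- by rewrite space_mx_downset_mx_le //; apply: mx_equiv_refl.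
Qed.
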